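(* Let $V$ be a complex vector space of dimension $n$ and let $K\subseteq\bigwedge^2V$ be a subspace of dimension $2n-3$ such that $\mathbf{P}(K^\perp)\cap\mathrm{Gr}_2(V^\vee)\neq\emptyset$. Then $\dim W_q(V,K)\geq q+1$ for all $q\geq 0$.
   Context: $K^\perp\subseteq\bigwedge^2V^\vee$ is the annihilator of $K$, and $\mathrm{Gr}_2(V^\vee)\subseteq\mathbf{P}(\bigwedge^2V^\vee)$ is the Plücker embedding. $W_q(V,K)$ is the middle cohomology of $K\otimes\operatorname{Sym}^qV\to V\otimes\operatorname{Sym}^{q+1}V\to\operatorname{Sym}^{q+2}V$, with the first map the restriction of the Koszul differential $v_1\wedge v_2\otimes f\mapsto v_2\otimes v_1f-v_1\otimes v_2f$ and the second multiplication. *)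

From HB Require Import structures.
From mathcomp Require Import all_boot all_order all_algebra.
From mathcomp Require Import reals Rstruct complex.
From Stdlib Require Reals.

Set Implicit Arguments.
Unset Strict Implicit.
Unset Printing Implicit Defensive.

Import Order.TTheory GRing.Theory Num.Theory.
Local Open Scope ring_scope.

Definition CC : fieldType := (Rdefinitions.R)[i].

(* V = C^n with standard basis e_0, ..., e_{n-1}; V^vee has the dual basis. *)
Definition Vsp (n : nat) := {ffun 'I_n -> CC^o}.

(* Index set of the basis e_i /\ e_j (i < j) of  /\^2 V. *)
Definition pairs (n : nat) := {p : 'I_n * 'I_n | (p.1 < p.2)%N}.

(* /\^2 V, in coordinates w.r.t. the basis e_i /\ e_j, i < j.
   The same type is used for /\^2 V^vee in the dual basis
   e_i^* /\ e_j^*, i < j. *)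
Definition Wedge2 (n : nat) := {ffun pairs n -> CC^o}.

(* Monomials of degree q in the n variables x_0..x_{n-1}
   (x_i = e_i seen in Sym^1 V), given by their exponent vectors. *)
Definition mono (n q : nat) :=
  {m : {ffun 'I_n -> 'I_q.+1} | (\sum_(i < n) (m i : nat))%N == q}.

Definition Sym (n q : nat) := {ffun mono n q -> CC^o}.

(* Multiplication by the variable x_i : Sym^q V -> Sym^(q+1) V :
   the coefficient of m in x_i f is the coefficient in f of the monomial
   m' with m' + x_i = m (if any). *)
Definition xmul (n q : nat) (i : 'I_n) (f : Sym n q) : Sym n q.+1 :=
  [ffun m : mono n q.+1 =>
     \sum_(m' : mono n q |
            [forall j : 'I_n, ((val m' j : nat) + (j == i) == val m j)%N])
       f m'].

(* Pure tensor v (x) g  in  V (x) Sym^p V = {ffun 'I_n -> Sym n p}. *)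
Definition tensV (n p : nat) (v : Vsp n) (g : Sym n p) : {ffun 'I_n -> Sym n p} :=
  [ffun l => v l *: g].

Definition evec (n : nat) (j : 'I_n) : Vsp n := [ffun l => (l == j)%:R].

(* Pure tensor k (x) f  in  /\^2 V (x) Sym^q V = {ffun pairs n -> Sym n q}. *)
Definition tens2 (n q : nat) (k : Wedge2 n) (f : Sym n q) : {ffun pairs n -> Sym n q} :=
  [ffun p => k p *: f].

(* The Koszul differential  /\^2 V (x) Sym^q V -> V (x) Sym^(q+1) V,
   v1 /\ v2 (x) f  |->  v2 (x) v1 f - v1 (x) v2 f,
   written on the basis e_i /\ e_j (x) f (i < j). *)
Definition koszul (n q : nat) (t : {ffun pairs n -> Sym n q})
  : {ffun 'I_n -> Sym n q.+1} :=
  \sum_(p : pairs n)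
     (tensV (evec (val p).2) (xmul (val p).1 (t p))
      - tensV (evec (val p).1) (xmul (val p).2 (t p))).

Definition multmap (n q : nat) (g : {ffun 'I_n -> Sym n q.+1}) : Sym n q.+2 :=
  \sum_(l : 'I_n) xmul l (g l).

Definition tensK (n q : nat) (K : {vspace Wedge2 n})
  : {vspace {ffun pairs n -> Sym n q}} :=
  <<[seq tens2 k f | k <- vbasis K, f <- vbasis (fullv : {vspace Sym n q})]>>%VS.

(* Middle cohomology W_q(V,K) of
   K (x) Sym^q V -> V (x) Sym^(q+1) V -> Sym^(q+2) V,
   its dimension being dim ker - dim im (the image lies in the kernel). *)
Definition Wker (n q : nat) : {vspace {ffun 'I_n -> Sym n q.+1}} :=
  lker (linfun (@multmap n q)).

Definition Wim (n q : nat) (K : {vspace Wedge2 n})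
  : {vspace {ffun 'I_n -> Sym n q.+1}} :=
  (linfun (@koszul n q) @: tensK q K)%VS.

Definition dimW (n q : nat) (K : {vspace Wedge2 n}) : nat :=
  (\dim (Wker n q) - \dim (Wim q K))%N.

Definition wedge2 (n : nat) (phi psi : Vsp n) : Wedge2 n :=
  [ffun p : pairs n => phi (val p).1 * psi (val p).2 - phi (val p).2 * psi (val p).1].

Definition pairing (n : nat) (w k : Wedge2 n) : CC :=
  \sum_(p : pairs n) w p * k p.

Definition in_perp (n : nat) (K : {vspace Wedge2 n}) (w : Wedge2 n) : Prop :=
  forall k, k \in K -> pairing w k = 0.

(* [w] lies on Gr_2(V^vee) in its Pluecker embedding: w is a nonzero
   decomposable 2-vector. *)
Definition on_Gr (n : nat) (w : Wedge2 n) : Prop :=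
  w != 0 /\ exists phi psi : Vsp n, w = wedge2 phi psi.

Definition perp_meets_Gr (n : nat) (K : {vspace Wedge2 n}) : Prop :=
  exists w : Wedge2 n, in_perp K w /\ on_Gr w.

(* Write the point of P(K^perp) on the Grassmannian as phi /\ psi.  Contracting
   with phi and evaluating at the q+1 points b phi + psi (b = 0..q) of the line
   spanned by phi and psi is a linear map L : V (x) Sym^(q+1) V -> C^(q+1).  On the
   Koszul image of k (x) f it is -<phi /\ psi, k> times the values of f at these
   points, so L kills the image of K (x) Sym^q V.  Since q+1 distinct points of a
   line impose independent conditions on forms of degree q, L maps the kernel of
   the multiplication map (which contains every Koszul image) onto C^(q+1); hence
   dim ker - dim im >= q+1. *)

From HB Require Import structures.
From mathcomp Require Import all_boot all_order all_algebra.
From mathcomp Require Import ring.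
From mathcomp Require Import Rstruct complex.

Set Implicit Arguments.
Unset Strict Implicit.
Unset Printing Implicit Defensive.

Import Order.TTheory GRing.Theory Num.Theory.
Local Open Scope ring_scope.

Lemma sum_natb_scale (R : pzRingType) (I : finType) (V : lmodType R)
    (G : I -> V) (j : I) :
  \sum_l (l == j)%:R *: G l = G j.
Proof.
rewrite (bigD1 j) //= eqxx scale1r big1 ?addr0 // => l /negbTE ->.
exact: scale0r.
Qed.

Lemma sum_natb_mul (R : pzRingType) (I : finType) (G : I -> R) (j : I) :
  \sum_l (l == j)%:R * G l = G j.
Proof. exact: (sum_natb_scale (V := R^o)). Qed.

Lemma eqCC_nat (a b : nat) : ((a%:R : CC) == b%:R) = (a == b).
Proof. exact: (@eqr_nat (Rdefinitions.R)[i]). Qed.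

Section Polynomials.

Variable n : nat.

Definition mono_mulx_fun q (i : 'I_n) (m : mono n q) : {ffun 'I_n -> 'I_q.+2} :=
  [ffun j => inord ((val m j : nat) + (j == i))%N].

Lemma mono_mulx_funE q i (m : mono n q) j :
  (mono_mulx_fun i m j : nat) = ((val m j : nat) + (j == i))%N.
Proof.
rewrite ffunE inordK // ltnS addnC.
have := ltn_ord (val m j); rewrite ltnS => m_le.
exact: leq_add (leq_b1 _) m_le.
Qed.

Lemma mono_mulx_degree q i (m : mono n q) :
  (\sum_(j < n) (mono_mulx_fun i m j : nat) == q.+1)%N.
Proof.
under eq_bigr do rewrite mono_mulx_funE.
rewrite big_split /= (eqP (valP m)) -addn1 eqn_add2l.
by rewrite (bigD1 i) //= eqxx big1 // => j /negbTE ->.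
Qed.

Definition mono_mulx q (i : 'I_n) (m : mono n q) : mono n q.+1 :=
  exist _ (mono_mulx_fun i m) (mono_mulx_degree i m).

Lemma mono_mulxE q i (m : mono n q) j :
  (val (mono_mulx i m) j : nat) = ((val m j : nat) + (j == i))%N.
Proof. exact: mono_mulx_funE. Qed.

Lemma mono_mulxC q (i j : 'I_n) (m : mono n q) :
  mono_mulx j (mono_mulx i m) = mono_mulx i (mono_mulx j m).
Proof.
apply: val_inj; apply/ffunP => k; apply: ord_inj.
by rewrite !mono_mulxE addnAC.
Qed.

Lemma xmulE q i (f : Sym n q) m :
  xmul i f m = \sum_(m' | m == mono_mulx i m') f m'.
Proof.
rewrite ffunE; apply: eq_bigl => m'.
apply/forallP/eqP => [m_eq|-> j]; last by rewrite mono_mulxE.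
apply: val_inj; apply/ffunP => j; apply: ord_inj.
by rewrite mono_mulxE; apply/esym/eqP/m_eq.
Qed.

Lemma xmul_is_semilinear q (i : 'I_n) : semilinear (@xmul n q i).
Proof.
split=> [c f|f g]; apply/ffunP => m; rewrite [RHS]ffunE !xmulE.
  by rewrite scaler_sumr; apply: eq_bigr => m' _; rewrite ffunE.
by rewrite -big_split; apply: eq_bigr => m' _; rewrite ffunE.
Qed.

HB.instance Definition _ q (i : 'I_n) :=
  GRing.isSemilinear.Build CC (Sym n q) (Sym n q.+1) _ (@xmul n q i)
    (xmul_is_semilinear q i).

Lemma xmul2E q (i j : 'I_n) (f : Sym n q) m :
  xmul j (xmul i f) m = \sum_(m' | m == mono_mulx j (mono_mulx i m')) f m'.
Proof.
rewrite xmulE; under eq_bigr do rewrite xmulE.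
rewrite (exchange_big_dep xpredT) // [RHS]big_mkcond; apply: eq_bigr => m' _.
case: eqP => [->|ne]; last first.
  rewrite big_pred0 // => m''; apply/andP => -[/eqP em /eqP em''].
  by apply: ne; rewrite em em''.
rewrite (big_pred1 (mono_mulx i m')) // => m''.
rewrite /= andbC.
by case: (m'' =P mono_mulx i m') => [->|]; rewrite ?eqxx.
Qed.

Lemma xmulC q (i j : 'I_n) (f : Sym n q) : xmul j (xmul i f) = xmul i (xmul j f).
Proof.
by apply/ffunP => m; rewrite !xmul2E; under eq_bigl do rewrite mono_mulxC.
Qed.

Definition mono_eval q (m : mono n q) (x : Vsp n) : CC := \prod_j x j ^+ val m j.

Definition sym_eval q (x : Vsp n) (f : Sym n q) : CC^o :=
  \sum_m f m * mono_eval m x.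

Lemma sym_eval_is_semilinear q (x : Vsp n) : semilinear (@sym_eval q x).
Proof.
split=> [c f|f g]; rewrite /sym_eval.
  by rewrite scaler_sumr; apply: eq_bigr => m _; rewrite ffunE scalerAl.
by rewrite -big_split; apply: eq_bigr => m _; rewrite ffunE mulrDl.
Qed.

HB.instance Definition _ q (x : Vsp n) :=
  GRing.isSemilinear.Build CC (Sym n q) CC^o _ (@sym_eval q x)
    (sym_eval_is_semilinear q x).

Lemma mono_eval_mulx q i (m : mono n q) x :
  mono_eval (mono_mulx i m) x = x i * mono_eval m x.
Proof.
rewrite /mono_eval; under eq_bigr do rewrite mono_mulxE exprD.
rewrite big_split [RHS]mulrC; congr (_ * _).
by rewrite (bigD1 i) //= eqxx expr1 big1 ?mulr1 // => j /negbTE ->.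
Qed.

Lemma sym_eval_xmul q i (f : Sym n q) x :
  sym_eval x (xmul i f) = x i * sym_eval x f.
Proof.
rewrite /sym_eval; under eq_bigr do rewrite xmulE mulr_suml.
rewrite (exchange_big_dep xpredT) // mulr_sumr; apply: eq_bigr => m' _.
rewrite (big_pred1 (mono_mulx i m')) => [|m]; last by rewrite /= eq_sym.
by rewrite mono_eval_mulx mulrCA.
Qed.

Lemma mono0_degree :
  (\sum_(i < n) (([ffun => ord0] : {ffun 'I_n -> 'I_1}) i : nat) == 0)%N.
Proof. by rewrite big1 // => i _; rewrite ffunE. Qed.

Definition mono0 : mono n 0 := exist _ [ffun => ord0] mono0_degree.

Definition sym1 : Sym n 0 := [ffun m => (m == mono0)%:R].

Lemma sym_eval1 x : sym_eval x sym1 = 1.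
Proof.
rewrite /sym_eval (bigD1 mono0) //= big1 ?addr0 => [|m /negbTE m_neq0].
  by rewrite ffunE eqxx mul1r /mono_eval big1 // => j _; rewrite ffunE.
by rewrite ffunE m_neq0 mul0r.
Qed.

Definition dotv (c x : Vsp n) : CC := \sum_l c l * x l.

Definition mul_linform q (c : Vsp n) (f : Sym n q) : Sym n q.+1 :=
  \sum_l c l *: xmul l f.

Lemma sym_eval_mul_linform q (c : Vsp n) (f : Sym n q) x :
  sym_eval x (mul_linform c f) = dotv c x * sym_eval x f.
Proof.
rewrite /mul_linform /dotv linear_sum mulr_suml; apply: eq_bigr => l _.
by rewrite linearZ /= sym_eval_xmul scalerAl.
Qed.

Fixpoint prod_linforms (c : nat -> Vsp n) (k : nat) : Sym n k :=
  if k is k'.+1 then mul_linform (c k') (prod_linforms c k') else sym1.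

Lemma sym_eval_prod_linforms (c : nat -> Vsp n) k x :
  sym_eval x (prod_linforms c k) = \prod_(l < k) dotv (c l) x.
Proof.
elim: k => [|k IHk]; first by rewrite big_ord0 sym_eval1.
by rewrite big_ord_recr /= sym_eval_mul_linform IHk mulrC.
Qed.

End Polynomials.

Section KoszulComplex.

Variable n : nat.

Lemma tensV_is_semilinear p (v : Vsp n) : semilinear (@tensV n p v).
Proof.
split=> [c g|g h]; apply/ffunP => l; rewrite !ffunE; last exact: scalerDr.
by rewrite !scalerA mulrC.
Qed.

HB.instance Definition _ p (v : Vsp n) :=
  GRing.isSemilinear.Build CC _ _ _ (@tensV n p v) (tensV_is_semilinear p v).

Lemma koszul_is_semilinear q : semilinear (@koszul n q).
Proof.
split=> [c t|t u]; rewrite /koszul.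
  rewrite scaler_sumr; apply: eq_bigr => p _.
  by rewrite ffunE !linearZ /= scalerDr.
rewrite -big_split; apply: eq_bigr => p _.
by rewrite ffunE !linearD /= addrACA.
Qed.

HB.instance Definition _ q :=
  GRing.isSemilinear.Build CC _ _ _ (@koszul n q) (koszul_is_semilinear q).

Lemma koszulE q (t : {ffun pairs n -> Sym n q}) l :
  koszul t l = \sum_p ((l == (val p).2)%:R *: xmul (val p).1 (t p)
                       - (l == (val p).1)%:R *: xmul (val p).2 (t p)).
Proof. by rewrite /koszul sum_ffunE; apply: eq_bigr => p _; rewrite !ffunE. Qed.

Lemma multmap_is_semilinear q : semilinear (@multmap n q).
Proof.
split=> [c t|t u]; rewrite /multmap.
  by rewrite scaler_sumr; apply: eq_bigr => l _; rewrite ffunE linearZ.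
by rewrite -big_split; apply: eq_bigr => l _; rewrite ffunE linearD.
Qed.

HB.instance Definition _ q :=
  GRing.isSemilinear.Build CC _ _ _ (@multmap n q) (multmap_is_semilinear q).

Lemma multmap_koszul q (t : {ffun pairs n -> Sym n q}) : multmap (koszul t) = 0.
Proof.
rewrite /multmap; under eq_bigr do rewrite koszulE linear_sum.
rewrite exchange_big big1 // => p _.
under eq_bigr do rewrite linearB !linearZ /= scalerN.
by rewrite sumrB !sum_natb_scale xmulC subrr.
Qed.

Lemma koszul_in_Wker q (t : {ffun pairs n -> Sym n q}) : koszul t \in Wker n q.
Proof. by rewrite memv_ker lfunE /= multmap_koszul. Qed.

Lemma Wim_sub_Wker q (K : {vspace Wedge2 n}) : (Wim q K <= Wker n q)%VS.
Proof. by apply/subvP => _ /memv_imgP [t _ ->]; rewrite lfunE koszul_in_Wker. Qed.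

Definition contract_eval d (phi x : Vsp n) (z : {ffun 'I_n -> Sym n d}) : CC^o :=
  \sum_l phi l * sym_eval x (z l).

Lemma contract_eval_is_semilinear d (phi x : Vsp n) :
  semilinear (@contract_eval d phi x).
Proof.
split=> [c z|z u]; rewrite /contract_eval.
  rewrite scaler_sumr; apply: eq_bigr => l _.
  by rewrite ffunE linearZ /= mulrCA.
by rewrite -big_split; apply: eq_bigr => l _; rewrite ffunE linearD mulrDr.
Qed.

HB.instance Definition _ d (phi x : Vsp n) :=
  GRing.isSemilinear.Build CC _ _ _ (@contract_eval d phi x)
    (contract_eval_is_semilinear d phi x).

Lemma contract_eval_koszul q (phi x : Vsp n) (t : {ffun pairs n -> Sym n q}) :
  contract_eval phi x (koszul t) = - \sum_p wedge2 phi x p * sym_eval x (t p).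
Proof.
rewrite /contract_eval; under eq_bigr do rewrite koszulE linear_sum mulr_sumr.
rewrite exchange_big -sumrN; apply: eq_bigr => p _.
under eq_bigr do
  rewrite linearB !linearZ /= !sym_eval_xmul scalerN mulrBr -!(scalerAr _ (phi _)).
by rewrite sumrB !sum_natb_scale ffunE /GRing.scale /=; ring.
Qed.

End KoszulComplex.

Section Pencil.

Variables (n : nat) (phi psi : Vsp n).

Definition pencil (b : nat) : Vsp n := [ffun l => b%:R * phi l + psi l].

Lemma wedge2_pencil b : wedge2 phi (pencil b) = wedge2 phi psi.
Proof. by apply/ffunP => p; rewrite !ffunE; ring. Qed.

Definition pencil_eval r d (z : {ffun 'I_n -> Sym n d}) : 'rV[CC]_r :=
  \row_(b < r) contract_eval phi (pencil b) z.

Lemma pencil_eval_is_semilinear r d : semilinear (@pencil_eval r d).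
Proof.
by split=> [c z|z u]; apply/rowP => b; rewrite !mxE ?linearZ ?linearD.
Qed.

HB.instance Definition _ r d :=
  GRing.isSemilinear.Build CC _ _ _ (@pencil_eval r d)
    (pencil_eval_is_semilinear r d).

Lemma pencil_eval_koszul_tens2 r q (k : Wedge2 n) (f : Sym n q) :
  pencil_eval r (koszul (tens2 k f))
  = - pairing (wedge2 phi psi) k *: \row_(b < r) sym_eval (pencil b) f.
Proof.
apply/rowP => b; rewrite !mxE contract_eval_koszul wedge2_pencil mulNr.
rewrite /pairing mulr_suml; congr (- _); apply: eq_bigr => p _.
rewrite [tens2 _ _ _]ffunE linearZ /=; exact: mulrA.
Qed.

Definition cross_form (i j : 'I_n) (u : Vsp n) : Vsp n :=
  [ffun l => (l == i)%:R * u j - (l == j)%:R * u i].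

Lemma dotv_cross_form i j u x : dotv (cross_form i j u) x = u j * x i - u i * x j.
Proof.
rewrite /dotv; under eq_bigr do rewrite ffunE mulrBl -!mulrA.
by rewrite sumrB !sum_natb_mul.
Qed.

Lemma dotv_cross_form_pencil i j c b :
  dotv (cross_form i j (pencil c)) (pencil b)
  = (b%:R - c%:R) * (phi i * psi j - phi j * psi i).
Proof. by rewrite dotv_cross_form !ffunE; ring. Qed.

(* [f] is a multiple of the product of the linear forms [cross_form i j (pencil c)],
   c <> a, the one indexed by c vanishing at [pencil c]. *)
Lemma pencil_interpolation q (i j : 'I_n) (a : 'I_q.+1) :
  phi i * psi j - phi j * psi i != 0 ->
  exists f : Sym n q, \row_(b < q.+1) sym_eval (pencil b) f = delta_mx 0 a.
Proof.
move=> w_neq0.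
pose F := prod_linforms (fun k => cross_form i j (pencil (bump a k))) q.
have evalF b : sym_eval (pencil b) F
    = \prod_(k < q) ((b%:R - (bump a k)%:R) * (phi i * psi j - phi j * psi i)).
  rewrite sym_eval_prod_linforms; apply: eq_bigr => k _.
  exact: dotv_cross_form_pencil.
have Fa_neq0 : sym_eval (pencil a) F != 0.
  rewrite evalF; apply/prodf_neq0 => k _.
  by rewrite mulf_neq0 // subr_eq0 eqCC_nat neq_bump.
exists ((sym_eval (pencil a) F)^-1 *: F); apply/rowP => b.
rewrite !mxE eqxx linearZ /=; have [->|b_neq_a] := eqVneq b a; first exact: mulVf.
rewrite eq_sym in b_neq_a; have [k -> _] := unlift_some b_neq_a.
have -> : sym_eval (pencil (lift a k)) F = 0.
  by rewrite evalF; apply/eqP/prodf_eq0; exists k => //; rewrite subrr mul0r.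
by rewrite scaler0.
Qed.

Lemma limg_pencil_eval q (p0 : pairs n) :
  wedge2 phi psi p0 != 0 ->
  (linfun (@pencil_eval q.+1 q.+1) @: Wker n q)%VS = fullv.
Proof.
move=> w_neq0; apply/eqP; rewrite eqEsubv subvf /=; apply/subvP => v _.
rewrite [v]row_sum_delta; apply: memv_suml => a _; apply: memvZ.
have := w_neq0; rewrite ffunE => /(pencil_interpolation a) [f f_interp].
set delta_p0 : Wedge2 n := [ffun p => (p == p0)%:R].
have pairing_delta : pairing (wedge2 phi psi) delta_p0 = wedge2 phi psi p0.
  rewrite /pairing -[RHS](sum_natb_mul (wedge2 phi psi) p0).
  by apply: eq_bigr => p _; rewrite [delta_p0 p]ffunE mulrC.
have -> : delta_mx 0 a
    = linfun (@pencil_eval q.+1 q.+1)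
        ((- wedge2 phi psi p0)^-1 *: koszul (tens2 delta_p0 f)).
  rewrite lfunE linearZ /= pencil_eval_koszul_tens2 f_interp pairing_delta.
  by rewrite scalerA mulVf ?scale1r // oppr_eq0.
by apply/memv_img/memvZ/koszul_in_Wker.
Qed.

Lemma Wim_sub_ker_pencil_eval q (K : {vspace Wedge2 n}) :
  in_perp K (wedge2 phi psi) ->
  (Wim q K <= lker (linfun (@pencil_eval q.+1 q.+1)))%VS.
Proof.
move=> w_perp; rewrite /Wim /tensK limg_span.
apply/span_subvP => _ /mapP [_ /allpairsP [[k f] [k_basis _ ->]] ->].
rewrite memv_ker !lfunE /= pencil_eval_koszul_tens2.
by rewrite w_perp ?vbasis_mem // oppr0 scale0r.
Qed.

End Pencil.

Lemma dimv_sub_cap_ker (K : fieldType) (vT wT : vectType K) (f : 'Hom(vT, wT))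
    (U W : {vspace vT}) :
  (W <= U :&: lker f)%VS -> (\dim W + \dim (f @: U) <= \dim U)%N.
Proof. by move=> sWUf; rewrite -(limg_ker_dim f U) leq_add2r dimvS. Qed.

Lemma ffun_neq0 (I : finType) (V : nmodType) (g : {ffun I -> V}) :
  g != 0 -> exists i, g i != 0.
Proof.
move=> g_neq0; apply/existsP; apply: contraR g_neq0 => /existsPn g0.
by apply/eqP/ffunP => i; rewrite ffunE; apply/eqP/negbNE/g0.
Qed.

Theorem lemma3p3 (n : nat) (K : {vspace Wedge2 n}) :
  (\dim K + 3 = 2 * n)%N ->
  perp_meets_Gr K ->
  forall q : nat, (q.+1 <= dimW q K)%N.
Proof.
move=> _ [w [w_perp [w_neq0 [phi [psi w_def]]]]] q.
rewrite {w}w_def in w_perp w_neq0.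
have [p0 wp0_neq0] := ffun_neq0 w_neq0.
pose L := linfun (@pencil_eval n phi psi q.+1 q.+1).
have Wim_sub : (Wim q K <= Wker n q :&: lker L)%VS.
  by rewrite subv_cap Wim_sub_Wker Wim_sub_ker_pencil_eval.
have := dimv_sub_cap_ker Wim_sub.
rewrite (limg_pencil_eval q wp0_neq0) dimvf dim_matrix mul1r => dim_le.
by rewrite /dimW ltn_subRL -addnS.
Qed.
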